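(* Let $A\neq 0$ be a real symmetric $n\times n$ matrix such that $$\mathbb{1}^\top A\mathbb{1}\ge\sqrt{(n-k)^2+k^2}\,\|A\|_F$$ for some integer $k$ with $1\le k<n/2$. Then the spectral radius $\rho(A)$ is a simple eigenvalue of $A$ (equal to its largest eigenvalue), and a corresponding eigenvector can be chosen (up to sign) so that it has at least $n-k+1$ nonnegative entries, of which at least $n-k$ are strictly positive.
   Context: $\mathbb{1}\in\mathbb{R}^n$ is the all-ones vector and $\|A\|_F=\sqrt{\mathrm{tr}(AA^\top)}$ is the Frobenius norm. *)

(* Real numbers are modelled by an arbitrary real closed field. *)
From HB Require Import structures.
From mathcomp Require Import all_boot all_order all_algebra.
Set Implicit Arguments. Unset Strict Implicit. Unset Printing Implicit Defensive.
Import Order.TTheory GRing.Theory Num.Theory.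
Local Open Scope ring_scope.

Definition frob_norm (R : rcfType) (n : nat) (A : 'M[R]_n) : R :=
  Num.sqrt (\tr (A *m A^T)).

Definition ones_form (R : rcfType) (n : nat) (A : 'M[R]_n) : R :=
  (\sum_(i < n) \sum_(j < n) A i j).

Definition alg_mult (R : rcfType) (n : nat) (A : 'M[R]_n) (a : R) : nat :=
  mup a (char_poly A).

From HB Require Import structures.
From mathcomp Require Import all_boot all_order all_algebra.
From mathcomp Require Import sesquilinear spectral.
From mathcomp.real_closed Require Import complex.
From mathcomp Require Import ring lra zify.
Set Implicit Arguments. Unset Strict Implicit. Unset Printing Implicit Defensive.
Import Order.TTheory GRing.Theory Num.Theory.
Local Open Scope ring_scope.

(* Diagonalise A = P^* diag(e) P with P unitary, and let x_i = |(P 1)_i|^2 be the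
   weights of the all-ones vector on the eigenvectors, so that sum x_i = n,
   1^T A 1 = sum e_i x_i and ||A||_F^2 = sum e_i^2.  Comparing the hypothesis with
   two Cauchy-Schwarz-type bounds shows that the largest eigenvalue e_m strictly
   dominates the others in absolute value and that x_m >= n - k.  The real part w
   of the eigenvector conj((P 1)_m) P_m satisfies sum w = x_m and sum w^2 <= x_m,
   hence (n - k) sum w^2 <= (sum w)^2, which forces at least n - k positive
   entries and, since n - k < n, at least n - k + 1 nonnegative ones. *)

Section SignCounting.
Variables (R : realFieldType) (I : finType).
Implicit Types (w : I -> R) (p : nat).

Lemma sqr_sum_le_card_sum_sqr (A : {pred I}) w :
  (\sum_(i in A) w i) ^+ 2 <= #|A|%:R * \sum_(i in A) w i ^+ 2.
Proof.
set c : R := #|A|%:R; set s := \sum_(i in A) w i.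
have sum_sqr_dev : \sum_(i in A) (c * w i - s) ^+ 2 =
                   c * (c * \sum_(i in A) w i ^+ 2 - s ^+ 2).
  rewrite (eq_bigr (fun i => c ^+ 2 * w i ^+ 2 - (2 * c * s) * w i + s ^+ 2));
    last by move=> i _; ring.
  rewrite big_split /= sumrB -!mulr_sumr sumr_const -/s -mulr_natr -/c; ring.
have : 0 <= c * (c * \sum_(i in A) w i ^+ 2 - s ^+ 2).
  by rewrite -sum_sqr_dev; apply: sumr_ge0 => i _; apply: sqr_ge0.
have [c0|c_gt0] := eqVneq c 0; last first.
  by rewrite pmulr_rge0 ?subr_ge0 // lt_def c_gt0 ler0n.
have /card0_eq A0 : #|A| = 0%N by apply/eqP; rewrite -(eqr_nat R) -/c c0.
by move=> _; rewrite /s big_pred0 // expr0n /= c0 mul0r.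
Qed.

Local Notation pos w := [set i | (0 < w i)%R].

Lemma sum_le_sum_gt0 w : \sum_i w i <= \sum_(i in pos w) w i.
Proof.
rewrite (bigID (mem (pos w))) /= gerDl.
by apply: sumr_le0 => i; rewrite inE -leNgt.
Qed.

Lemma sum_lt_sum_gt0 w i0 : w i0 < 0 -> \sum_i w i < \sum_(i in pos w) w i.
Proof.
move=> wi0; rewrite (bigID (mem (pos w))) /= gtrDl (bigD1 i0) /=; last first.
  by rewrite inE -leNgt ltW.
suff : \sum_(i | (i \notin pos w) && (i != i0)) w i <= 0 by lra.
by apply: sumr_le0 => i /andP[]; rewrite inE -leNgt.
Qed.

Lemma sqr_sum_gt0_le_card w :
  (\sum_(i in pos w) w i) ^+ 2 <= #|pos w|%:R * \sum_i w i ^+ 2.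
Proof.
apply: le_trans (sqr_sum_le_card_sum_sqr _ _) _.
rewrite ler_wpM2l // [X in _ <= X](bigID (mem (pos w))) /= lerDl.
by apply: sumr_ge0 => i _; apply: sqr_ge0.
Qed.

Lemma card_gt0_ge p w : 0 < \sum_i w i ->
  p%:R * \sum_i w i ^+ 2 <= (\sum_i w i) ^+ 2 -> (p <= #|pos w|)%N.
Proof.
move=> s_gt0 hp; have sq := sqr_sum_gt0_le_card w.
have s_le := sum_le_sum_gt0 w.
have s2_le : (\sum_i w i) ^+ 2 <= #|pos w|%:R * \sum_i w i ^+ 2.
  by apply: le_trans sq; rewrite ler_sqr // nnegrE; lra.
have c0 : 0 <= #|pos w|%:R :> R by [].
have w2_gt0 : 0 < \sum_i w i ^+ 2 by nra.
by rewrite -(ler_nat R) -(ler_pM2r w2_gt0); lra.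
Qed.

Lemma card_ge0_gt p w : 0 < \sum_i w i ->
  p%:R * \sum_i w i ^+ 2 <= (\sum_i w i) ^+ 2 -> (p < #|I|)%N ->
  (p < #|[set i | (0 <= w i)%R]|)%N.
Proof.
move=> s_gt0 hp pI; have [i0 /= wi0|w_ge0] := pickP (fun i => w i < 0); last first.
  suff -> : [set i | 0 <= w i] = setT by rewrite cardsT.
  by apply/setP => i; rewrite !inE leNgt w_ge0.
have sq := sqr_sum_gt0_le_card w; have s_lt := sum_lt_sum_gt0 wi0.
have s2_lt : (\sum_i w i) ^+ 2 < #|pos w|%:R * \sum_i w i ^+ 2.
  by apply: lt_le_trans sq; rewrite ltr_pXn2r // nnegrE; lra.
have c0 : 0 <= #|pos w|%:R :> R by [].
have w2_gt0 : 0 < \sum_i w i ^+ 2 by nra.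
have /leq_trans-> // : (p < #|pos w|)%N.
  by rewrite -(ltr_nat R) -(ltr_pM2r w2_gt0); lra.
by apply: subset_leq_card; apply/subsetP => i; rewrite !inE => /ltW.
Qed.

End SignCounting.

Section Dominance.
Variable R : realFieldType.

Lemma sqr_wsum2_lt (a b l mu X Y : R) :
  0 <= b -> b < a -> 0 <= mu -> mu <= l -> 0 < l -> 0 <= X -> X < a ->
  X + Y = a + b -> (l * X + mu * Y) ^+ 2 < (a ^+ 2 + b ^+ 2) * (l ^+ 2 + mu ^+ 2).
Proof.
move=> b0 ba mu0 mul l0 X0 Xa XY.
(* For X <= Y the sum is at most the average (a + b) (l + mu) / 2; for X > Y we
   have b < X < a, hence X^2 + Y^2 < a^2 + b^2, and Cauchy-Schwarz applies. *)
have lmu_gt0 : 0 < l ^+ 2 + mu ^+ 2 by nra.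
have [XleY|YltX] := leP X Y.
  have N2_lt : (a + b) ^+ 2 < 2 * (a ^+ 2 + b ^+ 2) by nra.
  have le_mid : 2 * (l * X + mu * Y) <= (a + b) * (l + mu) by nra.
  have mid_sqr : (l + mu) ^+ 2 <= 2 * (l ^+ 2 + mu ^+ 2) by nra.
  have T0 : 0 <= l * X + mu * Y by nra.
  have sqr_le_mid : (2 * (l * X + mu * Y)) ^+ 2 <= ((a + b) * (l + mu)) ^+ 2.
    by rewrite ler_pXn2r // nnegrE; nra.
  have sqr_mid_le : (a + b) ^+ 2 * (l + mu) ^+ 2 <= (a + b) ^+ 2 * (2 * (l ^+ 2 + mu ^+ 2)).
    by rewrite ler_wpM2l ?sqr_ge0.
  nra.
have cauchy : (l * X + mu * Y) ^+ 2 <= (l ^+ 2 + mu ^+ 2) * (X ^+ 2 + Y ^+ 2).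
  rewrite -subr_ge0.
  have -> : (l ^+ 2 + mu ^+ 2) * (X ^+ 2 + Y ^+ 2) - (l * X + mu * Y) ^+ 2 =
            (l * Y - mu * X) ^+ 2 by ring.
  exact: sqr_ge0.
have XY_lt : X ^+ 2 + Y ^+ 2 < a ^+ 2 + b ^+ 2 by nra.
nra.
Qed.

Lemma sqr_bigmax_norm_le_sum (I : finType) (P : pred I) (f : I -> R) :
  (\big[Num.max/0]_(i | P i) `|f i|) ^+ 2 <= \sum_(i | P i) f i ^+ 2.
Proof.
have [j Pj|P0] := pickP P.
  have [i Pi ->] := @eq_bigmax _ R _ 0 j P (fun i => `|f i|) Pj (fun i _ => normr_ge0 (f i)).
  rewrite real_normK ?num_real // (bigD1 i) //= lerDl.
  by apply: sumr_ge0 => k _; apply: sqr_ge0.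
rewrite big_pred0 // expr0n /=.
by apply: sumr_ge0 => k _; apply: sqr_ge0.
Qed.

Lemma dominant_value_weight (I : finType) (e x : I -> R) (m : I) (a b : R) :
  0 <= b -> b < a -> (forall i, 0 <= x i) -> \sum_i x i = a + b ->
  (forall i, e i <= e m) -> 0 < \sum_i e i ^+ 2 -> 0 <= \sum_i e i * x i ->
  (a ^+ 2 + b ^+ 2) * \sum_i e i ^+ 2 <= (\sum_i e i * x i) ^+ 2 ->
  [/\ 0 < e m, forall j, j != m -> `|e j| < e m & a <= x m].
Proof.
move=> b0 ba x0 sum_x e_le F_gt0 S0 hS.
set F := \sum_i e i ^+ 2 in F_gt0 hS; set S := \sum_i e i * x i in S0 hS.
have S_le_max : S <= e m * (a + b).
  by rewrite /S -sum_x mulr_sumr; apply: ler_sum => i _; apply: ler_wpM2r.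
have S_le mu : (forall j, j != m -> `|e j| <= mu) ->
    S <= e m * x m + mu * (a + b - x m).
  move=> e_mu; rewrite /S (bigD1 m) //= lerD2l.
  have -> : a + b - x m = \sum_(j | j != m) x j.
    by rewrite -sum_x (bigD1 m) //= addrAC subrr add0r.
  rewrite mulr_sumr; apply: ler_sum => j jm.
  by apply: ler_wpM2r => //; apply: le_trans (ler_norm _) (e_mu _ jm).
have em_gt0 : 0 < e m.
  have cF_gt0 : 0 < (a ^+ 2 + b ^+ 2) * F by rewrite mulr_gt0 //; nra.
  have S_gt0 : 0 < S by nra.
  have ab_gt0 : 0 < a + b by lra.
  nra.
have wsum2_lt_S mu X : 0 <= mu -> mu <= e m -> 0 <= X -> X < a ->
    e m ^+ 2 + mu ^+ 2 <= F -> ~ S <= e m * X + mu * (a + b - X).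
  move=> mu0 mu_le X0 Xa F_mu S_le_mu.
  have XY : X + (a + b - X) = a + b by rewrite addrC subrK.
  have := sqr_wsum2_lt b0 ba mu0 mu_le em_gt0 X0 Xa XY.
  nra.
have e_lt j : j != m -> `|e j| < e m.
  move=> jm; rewrite ltNge; apply/negP => em_le.
  apply: (wsum2_lt_S (e m) 0) => //.
  - exact: ltW.
  - lra.
  - have em_sqr_le : e m ^+ 2 <= e j ^+ 2.
      by rewrite -[e j ^+ 2]real_normK ?num_real // ler_sqr ?nnegrE // ltW.
    suff : e m ^+ 2 + e j ^+ 2 <= F by lra.
    rewrite /F (bigD1 m) //= (bigD1 j) //= addrA lerDl.
    by apply: sumr_ge0 => i _; apply: sqr_ge0.
  - by rewrite mulr0 add0r subr0.
split=> //.
set mu := \big[Num.max/0]_(j | j != m) `|e j|.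
have mu0 : 0 <= mu by apply: bigmax_ge_id.
have mu_le : mu <= e m.
  by apply/bigmax_leP; split=> [|j /e_lt/ltW //]; apply: ltW.
have F_mu : e m ^+ 2 + mu ^+ 2 <= F.
  by rewrite /F (bigD1 m) //= lerD2l sqr_bigmax_norm_le_sum.
rewrite leNgt; apply/negP => Xa.
apply: (wsum2_lt_S mu (x m)) => //.
by apply: S_le => j jm; apply: le_bigmax_cond.
Qed.
End Dominance.

Lemma mxtrace_mul_tr_gt0 (R : realDomainType) m n (A : 'M[R]_(m, n)) :
  A != 0 -> 0 < \tr (A *m A^T).
Proof.
have trE : \tr (A *m A^T) = \sum_i \sum_j A i j ^+ 2.
  by apply: eq_bigr => i _; rewrite mxE; apply: eq_bigr => j _; rewrite mxE expr2.
have row_ge0 i : 0 <= \sum_j A i j ^+ 2 by apply: sumr_ge0 => j _; apply: sqr_ge0.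
move=> A0; rewrite trE lt_def andbC sumr_ge0 //=.
apply: contraNneq A0 => /psumr_eq0P A2_eq0; apply/eqP/matrixP => i j.
have /psumr_eq0P Ai_eq0 := A2_eq0 (fun i _ => row_ge0 i) i isT.
by apply/eqP; rewrite mxE -sqrf_eq0 Ai_eq0 // => l _; apply: sqr_ge0.
Qed.

Lemma char_poly_conj (F : fieldType) n (Q Q' M : 'M[F]_n) :
  Q' *m Q = 1%:M -> char_poly (Q' *m M *m Q) = char_poly M.
Proof.
move=> QQ'; rewrite /char_poly /char_poly_mx.
have -> : 'X%:M - map_mx polyC (Q' *m M *m Q) =
          map_mx polyC Q' *m ('X%:M - map_mx polyC M) *m map_mx polyC Q.
  by rewrite mulmxBr mulmxBl mul_mx_scalar -scalemxAl -!map_mxM QQ' map_mx1 scalemx1.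
by rewrite !det_mulmx mulrAC -det_mulmx -map_mxM QQ' map_mx1 det1 mul1r.
Qed.

Lemma mup_map (F K : fieldType) (f : {rmorphism F -> K}) (p : {poly F}) (a : F) :
  p != 0 -> mup (f a) (map_poly f p) = mup a p.
Proof.
move=> p0; have fp0 : map_poly f p != 0 by rewrite map_poly_eq0.
apply/eqP; rewrite eqn_leq; apply/andP; split.
  by rewrite mup_geq // -(dvdp_map f) rmorphXn /= map_polyXsubC -mup_geq.
by rewrite mup_geq // -map_polyXsubC -rmorphXn /= dvdp_map -mup_geq.
Qed.

Section RealSymmetric.
Variable R : rcfType.
Local Notation C := R[i].
Local Notation toC := (real_complex R).
Local Open Scope sesquilinear_scope.

Lemma Re_sum (I : finType) (f : I -> C) : complex.Re (\sum_i f i) = \sum_i complex.Re (f i).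
Proof. by elim/big_rec2: _ => // i a b _ <-; case: (f i) => ? ?; case: b. Qed.

Lemma Re_mul_real (a : C) (b : R) : complex.Re (a * toC b) = complex.Re a * b.
Proof. by case: a => a1 a2 /=; rewrite mulr0 subr0. Qed.

Lemma Re_mul_conj (a : C) : complex.Re (a * a^*) = complex.Re a ^+ 2 + complex.Im a ^+ 2.
Proof. by case: a => a1 a2 /=; rewrite !expr2 mulrN opprK. Qed.

Lemma real_mul_conj (a : C) : toC (complex.Re (a * a^*)) = a * a^*.
Proof. by apply/RRe_real/ger0_real/mul_conjC_ge0. Qed.

Lemma realsym_unitary_diag n (A : 'M[R]_n) : A^T = A ->
  exists (P : 'M[C]_n) (e : 'I_n -> R),
   [/\ P *m P^t* = 1%:M, P^t* *m P = 1%:M &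
       map_mx toC A = P^t* *m diag_mx (\row_i toC (e i)) *m P].
Proof.
move=> A_sym; set Ac := map_mx toC A.
have Ac_herm : Ac \is hermsymmx.
  apply: realsym_hermsym.
    by apply/is_hermitianmxP; rewrite expr0 scale1r map_mx_id // map_trmx A_sym.
  by apply/mxOverP => i j; rewrite mxE; apply/complex_realP; exists (A i j).
have := orthomx_spectralP (hermitian_normalmx Ac_herm).
have P_unitary := spectral_unitarymx Ac.
have d_real := hermitian_spectral_diag_real Ac_herm.
set P := spectralmx Ac; set d := spectral_diag Ac => Ac_eq.
exists P, (fun i => complex.Re (d 0 i)); split.
- exact/unitarymxP.
- by rewrite -(invmx_unitary P_unitary) mulVmx // unitarymx_unit.
rewrite {1}Ac_eq (invmx_unitary P_unitary); congr (_ *m diag_mx _ *m _).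
by apply/rowP => j; rewrite !mxE RRe_real //; move/mxOverP: d_real => /(_ 0 j).
Qed.

Section SpectralWeights.
Variables (n : nat) (A : 'M[R]_n) (P : 'M[C]_n) (e : 'I_n -> R).
Hypotheses (A_sym : A^T = A) (PPt : P *m P^t* = 1%:M) (PtP : P^t* *m P = 1%:M).
Let D := diag_mx (\row_i toC (e i)).
Hypothesis A_eq : map_mx toC A = P^t* *m D *m P.

Let ones : 'cV[C]_n := const_mx 1.
Let y := P *m ones.
(* The squared modulus of the coordinate of the all-ones vector on the i-th
   eigenvector (the i-th row of P). *)
Definition spectral_weight i := complex.Re (y i 0 * (y i 0)^*).

Lemma spectral_weight_ge0 i : 0 <= spectral_weight i.
Proof. by rewrite -lecR rmorph0 real_mul_conj mul_conjC_ge0. Qed.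

Lemma trace_mul_tr : \tr (A *m A^T) = \sum_i e i ^+ 2.
Proof.
apply: complexI; rewrite -trace_map_mx rmorph_sum A_sym map_mxM A_eq.
rewrite -!mulmxA [P *m (P^t* *m _)]mulmxA PPt mul1mx mxtrace_mulC -!mulmxA PPt mulmx1.
by apply: eq_bigr => i _; rewrite /D mul_mx_diag !mxE eqxx mulr1n rmorphXn expr2.
Qed.

Let y_adj : y^t* = ones^T *m P^t*.
Proof.
apply/rowP => i; rewrite !mxE rmorph_sum; apply: eq_bigr => j _.
by rewrite !mxE mulr1 mul1r.
Qed.

Lemma sum_spectral_weight : \sum_i spectral_weight i = n%:R.
Proof.
apply: complexI; rewrite rmorph_sum rmorph_nat.
transitivity ((y^t* *m y) 0 0).
  rewrite mxE; apply: eq_bigr => i _.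
  by apply: etrans (real_mul_conj _) _; rewrite mulrC !mxE.
rewrite y_adj /y !mulmxA -(mulmxA _ (P^t*)) PtP mulmx1 !mxE.
by rewrite (eq_bigr (fun _ => 1)) ?sumr_const ?card_ord // => i _; rewrite !mxE mulr1.
Qed.

Let ones_quad_form (M : 'M[C]_n) : (ones^T *m M *m ones) 0 0 = \sum_i \sum_j M i j.
Proof.
rewrite !mxE exchange_big; apply: eq_bigr => j _.
by rewrite !mxE mulr1; apply: eq_bigr => i _; rewrite !mxE mul1r.
Qed.

Lemma ones_form_spectral : ones_form A = \sum_i e i * spectral_weight i.
Proof.
apply: complexI; rewrite /ones_form !rmorph_sum.
transitivity (\sum_i \sum_j map_mx toC A i j).
  by apply: eq_bigr => i _; rewrite rmorph_sum; apply: eq_bigr => j _; rewrite mxE.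
rewrite -ones_quad_form A_eq !mulmxA -y_adj -(mulmxA _ P) -/y.
rewrite mxE; apply: eq_bigr => i _.
rewrite mul_mx_diag !mxE rmorphM /= /spectral_weight real_mul_conj /y !mxE; ring.
Qed.

Lemma real_eigenvector_weight m : exists w : 'rV[R]_n,
  [/\ w *m A = e m *: w, \sum_j w 0 j = spectral_weight m &
      \sum_j w 0 j ^+ 2 <= spectral_weight m].
Proof.
have PA : P *m map_mx toC A = D *m P by rewrite A_eq !mulmxA PPt mul1mx.
pose z : 'rV[C]_n := (y m 0)^* *: row m P.
have zA : z *m map_mx toC A = toC (e m) *: z.
  rewrite -scalemxAl -row_mul PA /z scalerA mulrC -scalerA; congr (_ *: _).
  by rewrite /D mul_diag_mx; apply/rowP => j; rewrite !mxE.
have z_sum : \sum_j z 0 j = (y m 0)^* * y m 0.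
  by rewrite /y mxE mulr_sumr; apply: eq_bigr => j _; rewrite !mxE mulr1.
have z_sqr : \sum_j z 0 j * (z 0 j)^* = (y m 0)^* * y m 0.
  transitivity ((y m 0)^* * y m 0 * (P *m P^t*) m m).
    rewrite [(P *m _) m m]mxE mulr_sumr; apply: eq_bigr => j _.
    by rewrite /z !mxE rmorphM /= conjCK; ring.
  by rewrite PPt [1%:M m m]mxE eqxx mulr1n mulr1.
exists (map_mx (@complex.Re R) z); split.
- apply/rowP => j; have := congr1 (fun M : 'rV[C]_n => complex.Re (M 0 j)) zA.
  rewrite /= !mxE Re_sum mulrC Re_mul_real mulrC => <-.
  by apply: eq_bigr => k _; rewrite !mxE Re_mul_real.
- rewrite /spectral_weight mulrC -z_sum Re_sum.
  by apply: eq_bigr => j _; rewrite mxE.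
- rewrite /spectral_weight mulrC -z_sqr Re_sum; apply: ler_sum => j _.
  by rewrite Re_mul_conj mxE lerDl sqr_ge0.
Qed.

Lemma eigenvalue_spectral a : eigenvalue A a -> exists j, e j = a.
Proof.
case/eigenvalueP => v vA v0.
pose u := map_mx toC v *m P^t*.
have uD : u *m D = toC a *: u.
  have := congr1 (mulmx^~ (P^t*)) (congr1 (map_mx toC) vA).
  by rewrite /= map_mxM map_mxZ A_eq !mulmxA -(mulmxA _ P) PPt mulmx1 -scalemxAl.
have [j /= uj|u0] := pickP (fun j => u 0 j != 0); last first.
  have u_eq0 : u = 0 by apply/rowP => j; rewrite [RHS]mxE; apply/eqP; exact: negbFE (u0 j).
  case/negP: v0; rewrite -(map_mx_eq0 toC) -[map_mx toC v]mulmx1 -PtP mulmxA.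
  by rewrite -/u u_eq0 mul0mx.
exists j; apply: complexI; apply: (mulfI uj).
have := congr1 (fun M : 'rV[C]_n => M 0 j) uD.
by rewrite /D mul_mx_diag !mxE => ->; rewrite mulrC.
Qed.

Lemma alg_mult_spectral a : alg_mult A a = #|[pred j | e j == a]|.
Proof.
rewrite /alg_mult -(mup_map toC _ (monic_neq0 (char_poly_monic A))) map_char_poly A_eq.
rewrite char_poly_conj // char_poly_trig ?diag_mx_is_trig //.
rewrite (eq_bigr (fun i => 'X - (toC (e i))%:P)); last first.
  by move=> i _; rewrite /D !mxE eqxx mulr1n.
rewrite -(big_map (fun i => toC (e i)) xpredT (fun z => 'X - z%:P)) mu_prod_XsubC count_map.
rewrite cardE /enum_mem size_filter; apply: eq_count => j /=.
by rewrite (inj_eq (@complexI R)).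
Qed.

Lemma dominant_spectral_weight (a b : R) m : 0 <= b -> b < a -> a + b = n%:R ->
  A != 0 -> (forall i, e i <= e m) ->
  Num.sqrt (a ^+ 2 + b ^+ 2) * frob_norm A <= ones_form A ->
  [/\ 0 < e m, forall j, j != m -> `|e j| < e m & a <= spectral_weight m].
Proof.
move=> b0 ba abn A0 e_le hcond.
have F_gt0 := mxtrace_mul_tr_gt0 A0.
have S_ge0 : 0 <= ones_form A by apply: le_trans hcond; rewrite mulr_ge0 ?sqrtr_ge0.
apply: dominant_value_weight b0 ba spectral_weight_ge0 _ e_le _ _ _;
  rewrite -?trace_mul_tr -?ones_form_spectral ?sum_spectral_weight //.
rewrite -[_ + _]sqr_sqrtr ?addr_ge0 ?sqr_ge0 // -[\tr _](sqr_sqrtr (ltW F_gt0)).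
by rewrite -exprMn ler_pXn2r // nnegrE mulr_ge0 ?sqrtr_ge0.
Qed.
End SpectralWeights.
End RealSymmetric.

Theorem theorem6 (R : rcfType) (n k : nat) (A : 'M[R]_n)
  (hsym : A^T = A) (hA : A != 0)
  (hk1 : (1 <= k)%N) (hkn : (2 * k < n)%N)
  (hcond : Num.sqrt (((n - k)%N)%:R ^+ 2 + k%:R ^+ 2) * frob_norm A
           <= ones_form A) :
  exists r : R,
    [/\ eigenvalue A r,
        (* r is the spectral radius rho(A) and the largest eigenvalue *)
        (forall a : R, eigenvalue A a -> `|a| <= r),
        (* r is a simple eigenvalue *)
        alg_mult A r = 1%N &
        exists v : 'cV[R]_n,
          [/\ v != 0, A *m v = r *: v,
              (n - k + 1 <= #|[set i : 'I_n | (0 <= v i ord0)%R]|)%N &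
              (n - k <= #|[set i : 'I_n | (0 < v i ord0)%R]|)%N]].
Proof.
have [P [e [PPt PtP A_eq]]] := realsym_unitary_diag hsym.
have n_gt0 : (0 < n)%N by lia.
case: (@arg_maxP _ _ _ (Ordinal n_gt0) xpredT e isT) => m _ e_le.
set a : R := ((n - k)%N)%:R.
have k_lt_a : k%:R < a by rewrite ltr_nat; lia.
have a_add_k : a + k%:R = n%:R by rewrite -natrD subnK //; lia.
have [em_gt0 e_lt a_le_xm] := dominant_spectral_weight hsym PPt PtP A_eq
  (ler0n R k) k_lt_a a_add_k hA (fun i => e_le i isT) hcond.
have [w [wA sum_w sum_w2]] := real_eigenvector_weight PPt A_eq m.
have sum_w_gt0 : 0 < \sum_j w 0 j.
  by rewrite sum_w; apply: lt_le_trans a_le_xm; rewrite ltr0n; lia.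
have w_neq0 : w != 0.
  by apply: contraTneq sum_w_gt0 => ->; rewrite big1 ?ltxx // => j _; rewrite mxE.
have sum_w_sqr : a * \sum_j w 0 j ^+ 2 <= (\sum_j w 0 j) ^+ 2.
  have a_ge0 : 0 <= a by [].
  by rewrite sum_w; nra.
exists (e m); split.
- by apply/eigenvalueP; exists w.
- move=> r /(eigenvalue_spectral PPt PtP A_eq) [j <-].
  by have [->|/e_lt/ltW] := eqVneq j m; first by rewrite gtr0_norm.
- rewrite (alg_mult_spectral PtP A_eq); apply: (@eq_card1 _ m) => j; rewrite !inE.
  have [->|/e_lt ej_lt] := eqVneq j m; first by rewrite eqxx.
  by rewrite lt_eqF // (le_lt_trans (ler_norm _)).
- have set_trmx (q : R -> bool) : [set i | q (w^T i ord0)] = [set i | q (w 0 i)].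
    by apply/setP => i; rewrite !inE mxE.
  exists w^T; split; rewrite ?set_trmx.
  + by rewrite trmx_eq0.
  + by rewrite -[A]hsym -trmx_mul wA linearZ.
  + by rewrite addn1; apply: card_ge0_gt sum_w_sqr _ => //; rewrite card_ord; lia.
  + exact: card_gt0_ge sum_w_sqr.
Qed.
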